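(* For integers $d\geqslant 0$ and real $x>0$ with $0\leqslant d\leqslant x$, $$\sum_{K_d-d<k\leqslant K_d}k^3=x\big(d^2\sqrt{dx}+O(d^{7/2}x^{-1/2})+O(d^2)\big),$$ where $k$ runs over integers, $K_d=K_d(x)$, and the implied constants are absolute.
   Context: For an integer $d\geqslant 0$ and real $x>0$, $K_d(x)=\big\lfloor \big(d+\sqrt{d^2+4dx}\,\big)/2\big\rfloor$, where $\lfloor\cdot\rfloor$ is the integer part. *)

From HB Require Import structures.
From mathcomp Require Import all_boot all_order all_algebra.
From mathcomp Require Import reals.
Set Implicit Arguments. Unset Strict Implicit. Unset Printing Implicit Defensive.
Import Order.TTheory GRing.Theory Num.Theory.
Local Open Scope ring_scope.

Definition Kd {R : realType} (d : nat) (x : R) : int :=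
  Num.floor ((d%:R + Num.sqrt (d%:R ^+ 2 + 4 * d%:R * x)) / 2).

(* Sum of f k over the integers k with a < k <= b (empty if b <= a). *)
Definition int_interval_sum {R : realType} (a b : int) (f : int -> R) : R :=
  \sum_(k <- [seq a + (i.+1)%:Z | i <- iota 0 `|b - a|%N] | k <= b) f k.

(* Write K = K_d(x), s = sqrt (d^2 + 4 d x) and m = 2 K - d. Telescoping
   k^3 = T k - T (k - 1) with T k = (k (k + 1) / 2)^2 gives the closed form
   8 * sum = d (m + 1) (m^2 + d^2 + 2 m), and the definition of K as a floor
   says s - 2 < m <= s. Replacing m by s costs O(d s^2) = O(d^2 x), and
   d s^3 / 8 differs from x d^2 sqrt (d x) by d^3 s / 8 + d^2 x (s - 2 sqrt (d x)) / 2,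
   where s <= 3 sqrt (d x) and s - 2 sqrt (d x) <= d^2 / (4 sqrt (d x)). *)

From HB Require Import structures.
From mathcomp Require Import all_boot all_order all_algebra.
From mathcomp Require Import reals ring lra.
Import Order.TTheory GRing.Theory Num.Theory.
Local Open Scope ring_scope.

Lemma int_interval_sum_addn (R : realType) (a : int) (n : nat) (f : int -> R) :
  int_interval_sum a (a + n%:Z) f = \sum_(0 <= i < n) f (a + i.+1%:Z).
Proof.
rewrite /int_interval_sum (addrC a) addrK big_map big_seq_cond.
rewrite (eq_bigl (fun i => i \in iota 0 n)) => [|i].
  by rewrite -big_seq /index_iota subn0.
by rewrite mem_iota add0n /= (addrC n%:Z) lerD2l lez_nat andb_idr.
Qed.

Lemma sum_cubes_telescope (R : comPzRingType) (a : R) (n : nat) :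
  4 * \sum_(0 <= i < n) (a + i.+1%:R) ^+ 3
  = (a + n%:R) ^+ 2 * (a + n%:R + 1) ^+ 2 - a ^+ 2 * (a + 1) ^+ 2.
Proof.
pose T i : R := (a + i%:R) ^+ 2 * (a + i%:R + 1) ^+ 2.
have -> : a ^+ 2 * (a + 1) ^+ 2 = T 0%N by rewrite /T addr0.
rewrite -telescope_sumr // mulr_sumr; apply: eq_bigr => i _.
by rewrite /T -[i.+1]addn1 natrD; ring.
Qed.

Lemma int_interval_sum_cubes (R : realType) (K : int) (d : nat) :
  let m : R := 2 * K%:~R - d%:R in
  8 * int_interval_sum (K - d%:Z) K (fun k => (k%:~R : R) ^+ 3)
  = d%:R * (m + 1) * (m ^+ 2 + d%:R ^+ 2 + 2 * m).
Proof.
move=> m; set a := K - d%:Z.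
rewrite -[X in int_interval_sum _ X](subrK d%:Z K) -/a int_interval_sum_addn.
under eq_bigr do rewrite rmorphD.
set S := \sum_(_ <= _ < _) _; have -> : 8 * S = 2 * (4 * S) by ring.
rewrite sum_cubes_telescope /m /a rmorphB /=.
by rewrite (_ : (d%:Z)%:~R = d%:R :> R) //; ring.
Qed.

Section Estimates.
Variable R : realFieldType.
Implicit Types d x q s w : R.

Lemma sqrt_disc_bounds d x q s : 0 <= d -> 0 <= q -> 0 <= s ->
  q ^+ 2 = d * x -> s ^+ 2 = d ^+ 2 + 4 * d * x ->
  [/\ 2 * q <= s, s <= d + 2 * q & 4 * q * (s - 2 * q) <= d ^+ 2].
Proof.
move=> d0 q0 s0 qE sE.
have s2q : 2 * q <= s by nra.
split=> //; nra.
Qed.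

Lemma cubic_near_cube d s w : 2 <= s -> w <= s -> s - 2 < w ->
  - (6 * s ^+ 2) <= (w + 1) * (w ^+ 2 + d ^+ 2 + 2 * w) - s ^+ 3
  <= 3 * s ^+ 2 + 2 * s + d ^+ 2 * s + d ^+ 2.
Proof.
move=> s2 ws sw; apply/andP; split.
- have cube_le : (s - 2) ^+ 3 <= w ^+ 3.
    have w0 : 0 <= w by lra.
    rewrite lerXn2r ?nnegrE //; lra.
  nra.
- have : (w + 1) * (w ^+ 2 + d ^+ 2 + 2 * w) <= (s + 1) * (s ^+ 2 + d ^+ 2 + 2 * s).
    by apply: ler_pM; nra.
  nra.
Qed.

Lemma cube_window_estimate d x q s w : 1 <= d -> d <= x -> 0 <= q -> 0 <= s ->
  q ^+ 2 = d * x -> s ^+ 2 = d ^+ 2 + 4 * d * x -> w <= s -> s - 2 < w ->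
  `| d * (w + 1) * (w ^+ 2 + d ^+ 2 + 2 * w) / 8 - x * (d ^+ 2 * q) |
  <= 8 * (d ^+ 3 * q + d ^+ 2 * x).
Proof.
move=> d1 dx q0 s0 qE sE ws sw.
have [s2q sdq hq] := @sqrt_disc_bounds d x q s (le_trans ler01 d1) q0 s0 qE sE.
have dq : d <= q by nra.
set E := (w + 1) * (w ^+ 2 + d ^+ 2 + 2 * w) - s ^+ 3.
have /andP[El Eu] : - (6 * s ^+ 2) <= E <= 3 * s ^+ 2 + 2 * s + d ^+ 2 * s + d ^+ 2.
  by apply: cubic_near_cube; lra.
(* d s^3 / 8 = d^3 s / 8 + d^2 x s / 2, since s^2 = d^2 + 4 d x *)
have -> : d * (w + 1) * (w ^+ 2 + d ^+ 2 + 2 * w) / 8 - x * (d ^+ 2 * q)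
    = (d * E + d ^+ 3 * s + 4 * (d ^+ 2 * x) * (s - 2 * q)) / 8.
  by rewrite /E [s ^+ 3]exprS sE; field.
clearbody E.
have ds2 : d * s ^+ 2 <= 5 * (d ^+ 2 * x) by nra.
have ds : d * s <= d * s ^+ 2 by nra.
have d3s : d ^+ 3 * s <= d ^+ 3 * (3 * q).
  by rewrite ler_wpM2l ?exprn_ge0 //; lra.
have d3 : d ^+ 3 <= d ^+ 2 * x by nra.
have tail : 4 * (d ^+ 2 * x) * (s - 2 * q) <= d ^+ 3 * q.
  have -> : 4 * (d ^+ 2 * x) * (s - 2 * q) = d * q * (4 * q * (s - 2 * q)).
    by rewrite (_ : d ^+ 2 * x = d * q ^+ 2); [ring | rewrite qE; ring].
  rewrite (_ : d ^+ 3 * q = d * q * d ^+ 2); last by ring.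
  by rewrite ler_wpM2l // mulr_ge0 //; lra.
have d0 : 0 <= d by lra.
have dEl : d * (- (6 * s ^+ 2)) <= d * E by rewrite ler_wpM2l.
have dEu : d * E <= d * (3 * s ^+ 2 + 2 * s + d ^+ 2 * s + d ^+ 2).
  by rewrite ler_wpM2l.
have d3s0 : 0 <= d ^+ 3 * s by rewrite mulr_ge0 ?exprn_ge0.
have tail0 : 0 <= 4 * (d ^+ 2 * x) * (s - 2 * q).
  by rewrite !mulr_ge0 ?exprn_ge0 //; lra.
have d3q0 : 0 <= d ^+ 3 * q by rewrite mulr_ge0 ?exprn_ge0.
rewrite ler_norml; apply/andP; split.
- move: dEl; rewrite (_ : d * - (6 * s ^+ 2) = - 6 * (d * s ^+ 2)); [lra | ring].
- move: dEu.
  rewrite (_ : d * (3 * s ^+ 2 + 2 * s + d ^+ 2 * s + d ^+ 2)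
             = 3 * (d * s ^+ 2) + 2 * (d * s) + d ^+ 3 * s + d ^+ 3); [lra | ring].
Qed.

End Estimates.

Lemma Kd_window {R : realType} (d : nat) (x : R) :
  let s := Num.sqrt (d%:R ^+ 2 + 4 * d%:R * x) in
  let w := 2 * (Kd d x)%:~R - d%:R in
  w <= s /\ s - 2 < w.
Proof.
move=> s w; have /andP[lo hi] := floor_itv ((d%:R + s) / 2 : R).
rewrite -/(Kd d x) rmorphD /= in lo hi.
by split; rewrite /w; lra.
Qed.

Lemma mul_sqrt_div_sqrt (R : rcfType) (d x : R) : 0 <= d -> 0 < x ->
  x * (Num.sqrt d / Num.sqrt x) = Num.sqrt (d * x).
Proof.
move=> d0 x0; have sx0 : 0 < Num.sqrt x by rewrite sqrtr_gt0.
rewrite sqrtrM // -{1}(sqr_sqrtr (ltW x0)); field.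
by rewrite gt_eqF.
Qed.

Theorem proposition3 :
  exists C : rat, 0 <= C /\
  forall (R : realType) (d : nat) (x : R), 0 < x -> d%:R <= x ->
    `| int_interval_sum (Kd d x - d%:Z) (Kd d x) (fun k => (k%:~R : R) ^+ 3)
       - x * (d%:R ^+ 2 * Num.sqrt (d%:R * x)) |
    <= ratr C * x * (d%:R ^+ 3 * Num.sqrt d%:R / Num.sqrt x + d%:R ^+ 2).
Proof.
exists 8%:R; split=> //; move=> R [|d'] x x0 dx; rewrite ratr_nat.
  rewrite /int_interval_sum subr0 subrr /= big_nil !expr0n /= !mul0r !mulr0.
  by rewrite subrr normr0 addr0 mulr0.
set d := d'.+1 in dx *; have d1 : 1 <= (d%:R : R) by rewrite ler1n.
have [ws sw] := Kd_window d x.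
set s := Num.sqrt _ in ws sw; set q := Num.sqrt (d%:R * x).
have sE : s ^+ 2 = d%:R ^+ 2 + 4 * d%:R * x by rewrite sqr_sqrtr //; nra.
have qE : q ^+ 2 = d%:R * x by rewrite sqr_sqrtr //; nra.
have n8 : (8 : R) != 0 by rewrite pnatr_eq0.
rewrite -[int_interval_sum _ _ _](mulKf n8) int_interval_sum_cubes mulrC.
rewrite (_ : 8 * x * _ = 8 * (d%:R ^+ 3 * q + d%:R ^+ 2 * x)).
  exact: (@cube_window_estimate R _ _ _ s) (sqrtr_ge0 _) (sqrtr_ge0 _) _ _ _ _.
by rewrite /q -(@mul_sqrt_div_sqrt R) ?ler0n //; ring.
Qed.
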